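(* Let $C$ be a strict globularily generated double category. Then the transversal category $\tau C$ of $C$ is the colimit (in $\mathbf{Cat}$) of the increasing chain of horizontal categories $H^C_1\subseteq H^C_2\subseteq\cdots$; i.e. $\tau C=\bigcup_n H^C_n$.
   Context: For a strict double category $C$: $C_0$ is the category of objects and vertical morphisms, $C_1$ the category of horizontal morphisms and 2-morphisms (composition = vertical composition), $i$ the horizontal identity, $\ast$ the strictly associative and unital horizontal composition. A 2-morphism is globular if its source and target are identity vertical morphisms. $C$ is globularily generated if the smallest sub-double category of $C$ containing all objects, vertical and horizontal morphisms and all globular 2-morphisms is $C$ itself. The transversal category $\tau C$ has as objects the vertical morphisms of $C$ and as morphisms the 2-morphisms of $C$ (a 2-morphism $\Phi$ goes from $s\Phi$ to $t\Phi$), with composition given by horizontal composition. Let $H^C_1$ consist of the globular 2-morphisms and horizontal identities $i_\alpha$ of vertical morphisms $\alpha$; $V^C_1$ is the subcategory of $C_1$ generated by $H^C_1$ (under vertical composition). For $n>1$, $H^C_n$ is the collection of all horizontal composites of finite composable sequences of morphisms of $V^C_{n-1}$, and $V^C_n$ is the subcategory of $C_1$ generated by $H^C_n$. For strict $C$, each $H^C_n$ is the set of morphisms of a subcategory of $\tau C$ containing all objects (the $n$-th horizontal category), and $H^C_n\subseteq H^C_{n+1}$. *)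

(* Plain Rocq (no library needed): strict double categories, presented with
   flat carrier types and partial operations (total functions whose laws are
   only required on composable arguments). *)
Set Implicit Arguments.

(* A strict double category C.
   - C_0 : objects [Obj], vertical morphisms [VMor] (vs/vt source/target,
     vid identity, [vcomp a b] = "a then b", defined when vt a = vs b).
   - C_1 : objects = horizontal morphisms [HMor] (hs/ht their source/target
     objects), morphisms = 2-morphisms [Sq]; [sqs]/[sqt] source/target in C_1,
     [sqid] identities, [sqv P Q] = "P then Q" (vertical composition).
   - the functors s,t : C_1 -> C_0 : on objects hs/ht, on morphisms sql/sqr.
   - the functor i : C_0 -> C_1 : hidO on objects, hidV on morphisms.
   - horizontal composition * : C_1 x_{C_0} C_1 -> C_1 : hcH on objects,
     hcS on morphisms; strictly associative and unital. *)
Record DoubleCat := {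
  Obj : Type; VMor : Type; HMor : Type; Sq : Type;
  vs : VMor -> Obj; vt : VMor -> Obj; vid : Obj -> VMor;
  vcomp : VMor -> VMor -> VMor;
  hs : HMor -> Obj; ht : HMor -> Obj;
  sqs : Sq -> HMor; sqt : Sq -> HMor;
  sql : Sq -> VMor; sqr : Sq -> VMor;
  sqid : HMor -> Sq; sqv : Sq -> Sq -> Sq;
  hidO : Obj -> HMor; hidV : VMor -> Sq;
  hcH : HMor -> HMor -> HMor; hcS : Sq -> Sq -> Sq;

  vs_vid : forall x, vs (vid x) = x;
  vt_vid : forall x, vt (vid x) = x;
  vs_vcomp : forall a b, vt a = vs b -> vs (vcomp a b) = vs a;
  vt_vcomp : forall a b, vt a = vs b -> vt (vcomp a b) = vt b;
  vcomp_id_l : forall a, vcomp (vid (vs a)) a = a;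
  vcomp_id_r : forall a, vcomp a (vid (vt a)) = a;
  vcomp_assoc : forall a b c, vt a = vs b -> vt b = vs c ->
    vcomp (vcomp a b) c = vcomp a (vcomp b c);

  sqs_sqid : forall f, sqs (sqid f) = f;
  sqt_sqid : forall f, sqt (sqid f) = f;
  sqs_sqv : forall P Q, sqt P = sqs Q -> sqs (sqv P Q) = sqs P;
  sqt_sqv : forall P Q, sqt P = sqs Q -> sqt (sqv P Q) = sqt Q;
  sqv_id_l : forall P, sqv (sqid (sqs P)) P = P;
  sqv_id_r : forall P, sqv P (sqid (sqt P)) = P;
  sqv_assoc : forall P Q R, sqt P = sqs Q -> sqt Q = sqs R ->
    sqv (sqv P Q) R = sqv P (sqv Q R);

  vs_sql : forall P, vs (sql P) = hs (sqs P);
  vt_sql : forall P, vt (sql P) = hs (sqt P);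
  sql_sqid : forall f, sql (sqid f) = vid (hs f);
  sql_sqv : forall P Q, sqt P = sqs Q -> sql (sqv P Q) = vcomp (sql P) (sql Q);
  vs_sqr : forall P, vs (sqr P) = ht (sqs P);
  vt_sqr : forall P, vt (sqr P) = ht (sqt P);
  sqr_sqid : forall f, sqr (sqid f) = vid (ht f);
  sqr_sqv : forall P Q, sqt P = sqs Q -> sqr (sqv P Q) = vcomp (sqr P) (sqr Q);

  hs_hidO : forall x, hs (hidO x) = x;
  ht_hidO : forall x, ht (hidO x) = x;
  sqs_hidV : forall a, sqs (hidV a) = hidO (vs a);
  sqt_hidV : forall a, sqt (hidV a) = hidO (vt a);
  sql_hidV : forall a, sql (hidV a) = a;
  sqr_hidV : forall a, sqr (hidV a) = a;
  hidV_vid : forall x, hidV (vid x) = sqid (hidO x);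
  hidV_vcomp : forall a b, vt a = vs b ->
    hidV (vcomp a b) = sqv (hidV a) (hidV b);

  hs_hcH : forall f g, ht f = hs g -> hs (hcH f g) = hs f;
  ht_hcH : forall f g, ht f = hs g -> ht (hcH f g) = ht g;
  sqs_hcS : forall P Q, sqr P = sql Q -> sqs (hcS P Q) = hcH (sqs P) (sqs Q);
  sqt_hcS : forall P Q, sqr P = sql Q -> sqt (hcS P Q) = hcH (sqt P) (sqt Q);
  sql_hcS : forall P Q, sqr P = sql Q -> sql (hcS P Q) = sql P;
  sqr_hcS : forall P Q, sqr P = sql Q -> sqr (hcS P Q) = sqr Q;
  hcS_sqid : forall f g, ht f = hs g -> hcS (sqid f) (sqid g) = sqid (hcH f g);
  hcS_interchange : forall P P' Q Q',
    sqt P = sqs P' -> sqt Q = sqs Q' -> sqr P = sql Q -> sqr P' = sql Q' ->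
    hcS (sqv P P') (sqv Q Q') = sqv (hcS P Q) (hcS P' Q');

  hcH_id_l : forall f, hcH (hidO (hs f)) f = f;
  hcH_id_r : forall f, hcH f (hidO (ht f)) = f;
  hcH_assoc : forall f g h, ht f = hs g -> ht g = hs h ->
    hcH (hcH f g) h = hcH f (hcH g h);
  hcS_id_l : forall P, hcS (hidV (sql P)) P = P;
  hcS_id_r : forall P, hcS P (hidV (sqr P)) = P;
  hcS_assoc : forall P Q R, sqr P = sql Q -> sqr Q = sql R ->
    hcS (hcS P Q) R = hcS P (hcS Q R)
}.

Section DC.
Variable C : DoubleCat.

Definition is_vid (a : VMor C) : Prop := a = vid C (vs C a).

Definition globular (P : Sq C) : Prop := is_vid (sql C P) /\ is_vid (sqr C P).

(* The 2-morphisms of the smallest sub-double category of C containing all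
   objects, vertical and horizontal morphisms and all globular 2-morphisms. *)
Inductive glob_gen : Sq C -> Prop :=
  | gg_glob : forall P, globular P -> glob_gen P
  | gg_sqid : forall f, glob_gen (sqid C f)
  | gg_hid : forall a, glob_gen (hidV C a)
  | gg_vcomp : forall P Q, sqt C P = sqs C Q -> glob_gen P -> glob_gen Q ->
      glob_gen (sqv C P Q)
  | gg_hcomp : forall P Q, sqr C P = sql C Q -> glob_gen P -> glob_gen Q ->
      glob_gen (hcS C P Q).

Definition globularily_generated : Prop := forall P : Sq C, glob_gen P.

Definition H1 (P : Sq C) : Prop := globular P \/ exists a, P = hidV C a.

Inductive vgen (X : Sq C -> Prop) : Sq C -> Prop :=
  | vg_base : forall P, X P -> vgen X P
  | vg_id : forall f, vgen X (sqid C f)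
  | vg_comp : forall P Q, sqt C P = sqs C Q -> vgen X P -> vgen X Q ->
      vgen X (sqv C P Q).

(* Horizontal composites of finite (nonempty) composable sequences of
   elements of X; by strict associativity these are exactly the left-bracketed
   composites built below. *)
Inductive hcomps (X : Sq C -> Prop) : Sq C -> Prop :=
  | hc_one : forall P, X P -> hcomps X P
  | hc_snoc : forall P Q, sqr C P = sql C Q -> hcomps X P -> X Q ->
      hcomps X (hcS C P Q).

(* Hs m = H^C_{m+1};  H^C_{n} = hcomps (V^C_{n-1}),  V^C_n = vgen H^C_n. *)
Fixpoint Hs (m : nat) : Sq C -> Prop :=
  match m with
  | O => H1
  | S k => hcomps (vgen (Hs k))
  end.

Definition Hcat (n : nat) : Sq C -> Prop := Hs (pred n).
Definition Vcat (n : nat) : Sq C -> Prop := vgen (Hcat n).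

End DC.

From Stdlib Require Import Lia.

(* Every generator of the globularily generated sub-double category lies in
   H^C_1 or H^C_2, and if P and Q lie in H^C_n then so do their vertical and
   horizontal composites in H^C_{n+1}; since the chain is increasing, an
   induction on glob_gen places every 2-morphism in some H^C_n. *)

Section HorizontalChain.
Variable C : DoubleCat.

Lemma Hs_succ m P : Hs C m P -> Hs C (S m) P.
Proof. intro HP. apply hc_one, vg_base, HP. Qed.

Lemma Hs_mono m k P : m <= k -> Hs C m P -> Hs C k P.
Proof. induction 1; auto using Hs_succ. Qed.

Lemma Hs_common_level {m k P Q} :
  Hs C m P -> Hs C k Q -> Hs C (max m k) P /\ Hs C (max m k) Q.
Proof. split; [apply Hs_mono with m | apply Hs_mono with k]; auto; lia. Qed.

Lemma Hs0_globular P : @globular C P -> Hs C 0 P.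
Proof. now left. Qed.

Lemma Hs0_hidV a : Hs C 0 (hidV C a).
Proof. right. now exists a. Qed.

Lemma Hs1_sqid f : Hs C 1 (sqid C f).
Proof. apply hc_one, vg_id. Qed.

Lemma Hs_sqv m P Q :
  sqt C P = sqs C Q -> Hs C m P -> Hs C m Q -> Hs C (S m) (sqv C P Q).
Proof. intros PQ HP HQ. apply hc_one, vg_comp; auto using vg_base. Qed.

Lemma Hs_hcS m P Q :
  sqr C P = sql C Q -> Hs C m P -> Hs C m Q -> Hs C (S m) (hcS C P Q).
Proof. intros PQ HP HQ. apply hc_snoc; auto using hc_one, vg_base. Qed.

Lemma glob_gen_in_Hs {P} : glob_gen C P -> exists m, Hs C m P.
Proof.
  induction 1 as [P Pglob | f | a
                 | P Q PQ _ [m HP] _ [k HQ] | P Q PQ _ [m HP] _ [k HQ]].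
  - exists 0. now apply Hs0_globular.
  - exists 1. apply Hs1_sqid.
  - exists 0. apply Hs0_hidV.
  - destruct (Hs_common_level HP HQ) as [HP' HQ'].
    exists (S (max m k)). now apply Hs_sqv.
  - destruct (Hs_common_level HP HQ) as [HP' HQ'].
    exists (S (max m k)). now apply Hs_hcS.
Qed.

End HorizontalChain.

Theorem corollary4p2 (C : DoubleCat) :
  globularily_generated C ->
  forall P : Sq C, exists n : nat, 1 <= n /\ Hcat C n P.
Proof.
  intros Cgen P. destruct (glob_gen_in_Hs C (Cgen P)) as [m HP].
  exists (S m). split; [lia | exact HP].
Qed.
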